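(* Let $\pi$ be a topological group, $k$ a finite field and $F$ a field. For $i=1,\dots,N$, let $\rho_i:\pi\to\mathrm{GL}(V_i)$ be a finite-dimensional representation over $k$ with finite monodromy group $G_i=\rho_i(\pi)\le\mathrm{GL}(V_i)$, and let $\eta_i:G_i\to\mathrm{GL}(W_i)$ be a nontrivial representation over $F$. Let $\rho=\bigoplus_{i=1}^N(\eta_i\circ\rho_i):\pi\to\prod_{i=1}^N\mathrm{GL}(W_i)$ and $G=\rho(\pi)$. Assume: (1) each $G_i$ is quasisimple, i.e. $G_i$ is perfect and $G_i'=G_i/Z(G_i)$ is simple; (2) for every $i\ne j$, the pair $(G_l'\to\mathrm{PGL}(V_l))_{l=i,j}$ is Goursat-adapted; (3) for every $i\neq j$ there is no isomorphism $\rho_i\cong\chi\otimes\sigma(\rho_j)$ or $\rho_i\cong\chi\otimes D(\sigma(\rho_j))$ with $\chi$ a one-dimensional representation of $\pi$ over $k$ and $\sigma\in\mathrm{Aut}(k)$. Then $G=\prod_{i=1}^N(G_i/\ker\eta_i)$ (i.e. $G$ is as large as possible inside $\prod_i\eta_i(G_i)$).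
   Context: A pair $(G_i\to\mathrm{PGL}(V_i))_{i=1,2}$ of faithful representations over a finite field $k$ is Goursat-adapted if every isomorphism $G_1\cong G_2$ is of the form $X\mapsto A\sigma(X)A^{-1}$ for an isomorphism $A:V_1\to V_2$, or $X\mapsto A\sigma(X)^{-t}A^{-1}$ for an isomorphism $A:V_1^*\to V_2$, with $\sigma\in\mathrm{Aut}(k)$ acting on matrix entries. $G_l'$ is regarded in $\mathrm{PGL}(V_l)$ via the natural map. $\sigma(\rho_j)=\sigma\circ\rho_j$, and $D(\cdot)$ denotes the dual (contragredient) representation. *)

From HB Require Import structures.
From mathcomp Require Import all_boot all_order all_algebra all_fingroup all_solvable all_field all_character.
From mathcomp Require Import boolp.
Set Implicit Arguments.
Unset Strict Implicit.
Unset Printing Implicit Defensive.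
Import GRing.Theory.

Local Open Scope ring_scope.

(* The group GL(V) for V = k^(n.+1) (row vectors); dimensions are n.+1 > 0. *)
Notation GLk k n := {'GL_n.+1[k]}.

Definition img_set (pi : Type) (k : finFieldType) (n : nat)
    (rho : pi -> GLk k n) : {set GLk k n} :=
  [set g | `[< exists p, rho p = g >]].

(* The central subgroup of scalar matrices in GL(V); PGL(V) = GL(V)/Scal. *)
Definition Scal (k : finFieldType) (n : nat) : {set GLk k n} :=
  [set g | is_scalar_mx (GLval g)].

Definition quasisimple (gT : finGroupType) (G : {group gT}) : Prop :=
  ([~: G, G] = G)%g /\ simple (G / 'Z(G))%g.

(* The natural map G' = G/Z(G) -> PGL(V) is a well-defined faithful
   representation, i.e. Z(G) is exactly the set of scalar elements of G. *)
Definition natural_proj_faithful (k : finFieldType) (n : nat)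
    (G : {group GLk k n}) : Prop :=
  ('Z(G) = G :&: Scal k n)%g.

Definition field_aut (k : finFieldType) (s : {rmorphism k -> k}) : Prop :=
  bijective s.

(* Goursat-adapted pair, for the images G1/Scal <= PGL(V1), G2/Scal <= PGL(V2)
   (images of G'_l under the natural maps).  Matrices act on row vectors;
   A : 'M_(n1,n2) with two-sided inverse B : 'M_(n2,n1) is an isomorphism
   V1 -> V2 (resp. V1^* -> V2), and X |-> B sigma(X) A is conjugation by it. *)
Definition goursat_adapted (k : finFieldType) (n1 n2 : nat)
    (G1 : {group GLk k n1}) (G2 : {group GLk k n2}) : Prop :=
  forall f : {morphism (G1 / Scal k n1)%g >-> coset_of (Scal k n2)},
    isom (G1 / Scal k n1)%g (G2 / Scal k n2)%g f ->
    exists s : {rmorphism k -> k}, field_aut s /\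
    exists (A : 'M[k]_(n1.+1, n2.+1)) (B : 'M[k]_(n2.+1, n1.+1)),
      (A *m B = 1%:M /\ B *m A = 1%:M) /\
      ((forall g, g \in G1 -> exists h : GLk k n2,
          GLval h = B *m map_mx s (GLval g) *m A /\
          f (coset (Scal k n1) g) = coset (Scal k n2) h)
       \/
       (forall g, g \in G1 -> exists h : GLk k n2,
          GLval h = B *m (invmx (map_mx s (GLval g)))^T *m A /\
          f (coset (Scal k n1) g) = coset (Scal k n2) h)).

Definition one_dim_rep (pi : groupType) (k : finFieldType) (chi : pi -> k) : Prop :=
  chi 1%g = 1 /\ forall p q : pi, chi (p * q)%g = chi p * chi q.

Definition iso_twist (pi : groupType) (k : finFieldType) (ni nj : nat)
    (rhoi : pi -> GLk k ni) (rhoj : pi -> GLk k nj) (chi : pi -> k)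
    (s : {rmorphism k -> k}) : Prop :=
  exists (A : 'M[k]_(nj.+1, ni.+1)) (B : 'M[k]_(ni.+1, nj.+1)),
    (A *m B = 1%:M /\ B *m A = 1%:M) /\
    forall p, GLval (rhoi p) = chi p *: (B *m map_mx s (GLval (rhoj p)) *m A).

Definition iso_twist_dual (pi : groupType) (k : finFieldType) (ni nj : nat)
    (rhoi : pi -> GLk k ni) (rhoj : pi -> GLk k nj) (chi : pi -> k)
    (s : {rmorphism k -> k}) : Prop :=
  exists (A : 'M[k]_(nj.+1, ni.+1)) (B : 'M[k]_(ni.+1, nj.+1)),
    (A *m B = 1%:M /\ B *m A = 1%:M) /\
    forall p, GLval (rhoi p) =
      chi p *: (B *m (invmx (map_mx s (GLval (rhoj p))))^T *m A).

(** For i <> j, the image under rho_j of rho_i^-1(Z(G_i)) is normal in the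
    quasisimple group G_j, hence central or all of G_j.  If it were central, then
    so would be the image under rho_i of rho_j^-1(Z(G_j)) (were it all of G_i, G_j
    itself would be central); rho_i and rho_j would then have the same preimage of
    the scalars and induce an isomorphism G_i' ~ G_j'.  Goursat-adaptedness
    realises it by a semilinear map, possibly composed with the contragredient,
    and comparing scalars turns this into rho_j ~ chi (x) sigma(rho_i) or
    chi (x) D(sigma(rho_i)), excluded by (3).  So rho_j maps rho_i^-1(Z(G_i)) onto
    G_j, and as G_j is perfect, commutators show that it maps the intersection of
    the kernels of all the other rho_i onto G_j.  Multiplying such lifts realises
    every tuple of prod_i G_i, and a fortiori every tuple of prod_i eta_i(G_i). *)

From HB Require Import structures.
From mathcomp Require Import all_boot all_order all_algebra all_fingroup all_solvable all_field all_character.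
From mathcomp Require Import boolp.
Import GRing.Theory.
Set Implicit Arguments.
Unset Strict Implicit.
Local Open Scope group_scope.

Lemma quasisimple_normal (gT : finGroupType) (G K : {group gT}) :
  quasisimple G -> K <| G -> K \subset 'Z(G) \/ G \subset K.
Proof.
move=> [perfG simpleGZ] nsKG; have [sKG nKG] := andP nsKG.
have nZG : G \subset 'N('Z(G)) := normal_norm (center_normal G).
have nZK := subset_trans sKG nZG.
have /simpleP[_ /(_ (K / 'Z(G))%G (quotient_normal _ nsKG))] := simpleGZ.
case=> [/= KZ1 | /= KZ_GZ]; [left | right].
  by rewrite -quotient_sub1 // KZ1.
have sGZK : G \subset 'Z(G) * K by rewrite -quotientSK // KZ_GZ.
have abGK : abelian (G / K).
  apply: abelianS (quotient_abelian K (center_abelian G)).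
  by rewrite -(quotientMidr K 'Z(G)) quotientS.
by rewrite -{1}perfG -derg1 der1_min.
Qed.

Lemma quasisimple_noncentral (gT : finGroupType) (G : {group gT}) :
  quasisimple G -> ~ G \subset 'Z(G).
Proof. by case=> _ /simpleP[/eqP ntGZ _] /quotientS1. Qed.

Lemma mulg_morph1 (aT rT : groupType) (f : aT -> rT) :
  {morph f : x y / x * y} -> f 1 = 1.
Proof. by move=> fM; apply: (mulgI (f 1)); rewrite -fM !mulg1. Qed.

Section ImageOfPredicate.
Variables (pi : groupType) (gT : finGroupType) (rho : pi -> gT).
Hypothesis rho_hom : {morph rho : x y / x * y}.
HB.instance Definition _ := isUMagmaMorphism.Build pi gT rho (mulg_morph1 rho_hom, rho_hom).

Definition img_of (Q : {pred pi}) : {set gT} :=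
  [set g | `[< exists2 p, p \in Q & rho p = g >]].

Lemma img_ofP Q g : reflect (exists2 p, p \in Q & rho p = g) (g \in img_of Q).
Proof. by rewrite inE; apply: asboolP. Qed.

Lemma mem_img_of Q p : p \in Q -> rho p \in img_of Q.
Proof. by move=> Qp; apply/img_ofP; exists p. Qed.

Lemma img_of_group_set Q : umagma_closed Q -> group_set (img_of Q).
Proof.
move=> [Q1 QM]; apply/group_setP; split; first by rewrite -(mulg_morph1 rho_hom) mem_img_of.
by move=> _ _ /img_ofP[p Qp <-] /img_ofP[q Qq <-]; rewrite -gmulfM mem_img_of ?QM.
Qed.

Lemma preim_group_closed (H : {group gT}) : umagma_closed [pred p | rho p \in H].
Proof. by split=> [|p q]; rewrite !inE ?gmulf1 // gmulfM; apply: groupM. Qed.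

Lemma preim_conj_closed (H : {group gT}) :
  (forall q, rho q \in 'N(H)) ->
  forall p q, p \in [pred p | rho p \in H] -> p ^ q \in [pred p | rho p \in H].
Proof. by move=> nH p q; rewrite !inE gmulfJ memJ_norm. Qed.

Lemma img_of_normal (G : {set gT}) Q :
    G \subset img_of predT -> img_of Q \subset G ->
    (forall p q, p \in Q -> p ^ q \in Q) ->
  img_of Q <| G.
Proof.
move=> sGrho sQG QJ; rewrite /normal sQG; apply/subsetP=> g /(subsetP sGrho).
case/img_ofP=> q _ <-; rewrite inE; apply/subsetP=> _ /imsetP[_ /img_ofP[p Qp <-] ->].
by rewrite -gmulfJ mem_img_of ?QJ.
Qed.

Lemma perfect_sub_img_commg (G : {group gT}) (Q1 Q2 Q3 : {pred pi}) :
    [~: G, G] = G -> umagma_closed Q3 ->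
    (forall p q, p \in Q1 -> q \in Q2 -> [~ p, q] \in Q3) ->
    G \subset img_of Q1 -> G \subset img_of Q2 ->
  G \subset img_of Q3.
Proof.
move=> perfG Q3grp Q3R sGQ1 sGQ2.
rewrite -perfG -[img_of Q3]/(gval (Group (img_of_group_set Q3grp))) gen_subG.
apply/subsetP=> _ /imset2P[_ _ /(subsetP sGQ1)/img_ofP[p Q1p <-]
  /(subsetP sGQ2)/img_ofP[q Q2q <-] ->].
by rewrite -gmulfR mem_img_of ?Q3R.
Qed.

End ImageOfPredicate.

Lemma quotient_img_of (pi : groupType) (gT : finGroupType) (rho : pi -> gT)
    (H : {group gT}) Q :
  (forall p, rho p \in 'N(H)) -> img_of rho Q / H = img_of (coset H \o rho) Q.
Proof.
move=> nH; apply/setP=> c; apply/morphimP/img_ofP=> [[_ _ /img_ofP[p Qp <-] ->] | [p Qp <-]].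
  by exists p.
by exists (rho p); rewrite ?nH ?mem_img_of.
Qed.

Section IsomOfEqualKernels.
Variables (pi : groupType) (aT rT : finGroupType).
Variables (phi : pi -> aT) (psi : pi -> rT) (A : {group aT}) (B : {group rT}).
Hypotheses (phi_hom : {morph phi : x y / x * y}) (psi_hom : {morph psi : x y / x * y}).
HB.instance Definition _ := isUMagmaMorphism.Build pi aT phi (mulg_morph1 phi_hom, phi_hom).
HB.instance Definition _ := isUMagmaMorphism.Build pi rT psi (mulg_morph1 psi_hom, psi_hom).
Hypotheses (A_img : A :=: img_of phi predT) (B_img : B :=: img_of psi predT).
Hypothesis ker_eq : forall p, (phi p == 1) = (psi p == 1).

Lemma isom_of_ker_eq :
  exists2 f : {morphism A >-> rT}, isom A B f & forall p, f (phi p) = psi p.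
Proof.
have eq_phi_psi p q : (phi p == phi q) = (psi p == psi q).
  by rewrite -[phi p == _]divg_eq1 -[psi p == _]divg_eq1 -!gmulfV -!gmulfM ker_eq.
(* f a is the psi-image of any preimage of a, well defined as the kernels agree. *)
pose f a := odflt 1 [pick b | `[< exists p, phi p = a /\ psi p = b >]].
have fE p : f (phi p) = psi p.
  rewrite /f; case: pickP => [b /asboolP[q [/eqP phiE <-]] | /(_ (psi p))/asboolPn[]].
    by apply/eqP; rewrite -eq_phi_psi.
  by exists p.
have fM : {in A &, {morph f : a b / a * b}}.
  move=> a b; rewrite A_img => /img_ofP[p _ <-] /img_ofP[q _ <-].
  by rewrite -gmulfM !fE gmulfM.
exists (Morphism fM) => //; apply/isomP; split.
  apply/injmP=> a b /=; rewrite A_img => /img_ofP[p _ <-] /img_ofP[q _ <-].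
  by rewrite !fE => /eqP; rewrite -eq_phi_psi => /eqP.
rewrite morphimEdom B_img /= A_img; apply/setP=> b; apply/imsetP/img_ofP.
  by case=> a /img_ofP[p _ <-] ->; exists p; rewrite /= ?fE.
by case=> p _ <-; exists (phi p); rewrite ?mem_img_of //= fE.
Qed.

End IsomOfEqualKernels.

Section SubdirectProductOfQuasisimple.
Variables (pi : groupType) (I : finType) (gT : I -> finGroupType).
Variables (rho : forall i, pi -> gT i) (G : forall i, {group gT i}).
Hypothesis rho_hom : forall i, {morph rho i : x y / x * y}.
HB.instance Definition _ i :=
  isUMagmaMorphism.Build pi (gT i) (rho i) (mulg_morph1 (rho_hom i), rho_hom i).
Hypothesis G_img : forall i, G i :=: img_of (rho i) predT.
Hypothesis G_qs : forall i, quasisimple (G i).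
Hypothesis center_preims_differ : forall i j, i != j ->
  ~ (forall p, (rho i p \in 'Z(G i)) = (rho j p \in 'Z(G j))).

Lemma rho_in i p : rho i p \in G i.
Proof. by rewrite G_img mem_img_of. Qed.

Lemma rho_onto i g : g \in G i -> exists p, rho i p = g.
Proof. by rewrite G_img => /img_ofP[p _]; exists p. Qed.

Definition center_preim i : {pred pi} := [pred p | rho i p \in 'Z(G i)].

Definition ker_preim (s : seq I) : {pred pi} := [pred p | all (fun i => rho i p == 1) s].

Lemma ker_preim_closed s : umagma_closed (ker_preim s).
Proof.
split=> [|p q]; rewrite !inE; first by apply/allP=> i _ /=; rewrite gmulf1.
move=> /allP s1p /allP s1q; apply/allP=> i si /=.
by rewrite rho_hom (eqP (s1p i si)) mul1g s1q.
Qed.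

Lemma img_center_preim_normal i j : img_of (rho j) (center_preim i) <| G j.
Proof.
apply: (img_of_normal (rho_hom j)); first by rewrite G_img.
  by apply/subsetP=> _ /img_ofP[p _ <-]; apply: rho_in.
apply: (preim_conj_closed (rho_hom i)) => q.
exact: subsetP (normal_norm (center_normal _)) _ (rho_in i q).
Qed.

Let img_center_preim_group i j : {group gT j} :=
  Group (img_of_group_set (rho_hom j) (preim_group_closed (rho_hom i) 'Z(G i))).

Lemma central_of_img_center_preim i j :
    img_of (rho j) (center_preim i) \subset 'Z(G j) ->
    G i \subset img_of (rho i) (center_preim j) ->
  G j \subset 'Z(G j).
Proof.
move=> sUZ sGU; apply/subsetP=> _ /rho_onto[q <-].
have /img_ofP[p Zjp rhoE] := subsetP sGU _ (rho_in i q).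
have Zqp : rho j (q * p^-1) \in 'Z(G j).
  by apply: (subsetP sUZ); rewrite mem_img_of // inE gmulfM gmulfV /= rhoE mulgV group1.
by rewrite -(mulgVK p q) gmulfM groupM.
Qed.

Lemma sub_img_center_preim i j : i != j -> G j \subset img_of (rho j) (center_preim i).
Proof.
move=> neq_ij.
have [sUZ|//] := quasisimple_normal (K := img_center_preim_group i j) (G_qs j)
  (img_center_preim_normal i j).
exfalso; have [sU'Z|sGU'] := quasisimple_normal (K := img_center_preim_group j i)
  (G_qs i) (img_center_preim_normal j i).
  apply: (center_preims_differ neq_ij) => p.
  by apply/idP/idP=> Zp; [apply: (subsetP sUZ) | apply: (subsetP sU'Z)]; apply: mem_img_of.
exact/(quasisimple_noncentral (G_qs j))/(central_of_img_center_preim sUZ sGU').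
Qed.

Lemma sub_img_ker_preim j s : j \notin s -> G j \subset img_of (rho j) (ker_preim s).
Proof.
elim: s => [_ | i s IHs].
  by apply/subsetP=> _ /rho_onto[p <-]; apply: mem_img_of.
rewrite in_cons eq_sym => /norP[neq_ij /IHs sGker].
apply: (perfect_sub_img_commg (rho_hom j) (G_qs j).1 (ker_preim_closed (i :: s)) _
  sGker (sub_img_center_preim neq_ij)).
move=> p q /allP s1p /centerP[_ cGq]; rewrite inE /= gmulfR /=.
apply/andP; split; last by apply/allP=> l sl; rewrite gmulfR /= (eqP (s1p l sl)) comm1g.
by apply/commgP; apply/esym/cGq/rho_in.
Qed.

Lemma subdirect_onto (x : forall i, gT i) :
  (forall i, x i \in G i) -> exists p, forall i, rho i p = x i.
Proof.
move=> Gx.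
have lift i : exists q, rho i q = x i /\ forall l, l != i -> rho l q = 1.
  have : i \notin [seq l <- enum I | l != i] by rewrite mem_filter eqxx.
  move/sub_img_ker_preim/subsetP/(_ _ (Gx i))/img_ofP=> [q /allP kerq qE].
  exists q; split=> // l neq_li; apply/eqP/kerq.
  by rewrite mem_filter neq_li mem_enum.
have [q qE] := fin_all_exists lift.
exists (\prod_(i : I) q i) => l; rewrite gmulf_prod (big_only1 l) //= ?(qE l).1 //.
by move=> i neq_il _; rewrite (qE i).2 // eq_sym.
Qed.

End SubdirectProductOfQuasisimple.

Section Scalars.
Variables (k : finFieldType) (n : nat).
Local Open Scope ring_scope.

Lemma ScalP (g : GLk k n) : reflect (exists a, GLval g = a%:M) (g \in Scal k n).
Proof. by rewrite inE; apply: is_scalar_mxP. Qed.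

Lemma Scal_group_set : group_set (Scal k n).
Proof.
apply/group_setP; split=> [|g h /ScalP[a ga] /ScalP[b hb]]; apply/ScalP.
  by exists 1; rewrite GL_1E.
by exists (a * b); rewrite GL_MxE ga hb -scalar_mxM.
Qed.
Canonical Scal_group := Group Scal_group_set.

Lemma Scal_sub_center : Scal k n \subset 'Z([set: GLk k n]).
Proof.
apply/subsetP=> g /ScalP[a ga]; apply/centerP; split=> [|h _]; first by rewrite inE.
apply: val_inj; change (GLval (g * h)%g = GLval (h * g)%g).
by rewrite !GL_MxE ga scalar_mxC.
Qed.

Lemma Scal_norm (g : GLk k n) : g \in 'N(Scal k n).
Proof. by rewrite (subsetP (normal_norm (sub_center_normal Scal_sub_center))) ?inE. Qed.

Lemma coset_Scal_eq1 (g : GLk k n) : (coset (Scal k n) g == 1%g) = (g \in Scal k n).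
Proof. by apply/eqP/idP=> [/(coset_idr (Scal_norm g)) | /coset_id]. Qed.

Lemma coset_Scal_eq (g h : GLk k n) :
  coset (Scal k n) g = coset (Scal k n) h -> exists c, GLval g = c *: GLval h.
Proof.
move/(rcoset_kercosetP (Scal_norm g) (Scal_norm h)); rewrite mem_rcoset.
by case/ScalP=> c gh; exists c; rewrite -(mulgVK h g) GL_MxE gh mul_scalar_mx.
Qed.

End Scalars.

Section ScalarTwist.
Variables (pi : groupType) (k : finFieldType) (n : nat) (rho : pi -> GLk k n).
Hypothesis rho_hom : {morph rho : x y / x * y}.
Local Open Scope ring_scope.

Lemma one_dim_twist (Phi : pi -> 'M[k]_n.+1) :
    {morph Phi : p q / (p * q)%g >-> p *m q} -> Phi 1%g = 1%:M ->
    (forall p, exists c, GLval (rho p) = c *: Phi p) ->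
  exists2 chi, one_dim_rep chi & forall p, GLval (rho p) = chi p *: Phi p.
Proof.
move=> PhiM Phi1 projE.
have Phi_unit p : Phi p \in unitmx.
  by have /mulmx1_unit[] : Phi p *m Phi p^-1%g = 1%:M by rewrite -PhiM mulgV.
pose chi p := (GLval (rho p) *m invmx (Phi p)) 0 0.
have chiE p c : GLval (rho p) = c *: Phi p -> chi p = c.
  by move=> rhoE; rewrite /chi rhoE -scalemxAl mulmxV // scalemx1 mxE eqxx mulr1n.
have rhoE p : GLval (rho p) = chi p *: Phi p.
  by have [c rhoE] := projE p; rewrite (chiE p c rhoE).
exists chi => //; split=> [|p q]; apply: chiE.
  by rewrite mulg_morph1 // Phi1 scale1r.
by rewrite rho_hom GL_MxE !rhoE PhiM -scalemxAl -scalemxAr scalerA.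
Qed.

End ScalarTwist.

Section ConjugateTwist.
Variables (pi : groupType) (k : finFieldType) (n1 n2 : nat).
Variables (rho1 : pi -> GLk k n1) (rho2 : pi -> GLk k n2) (G1 : {group GLk k n1}).
Hypotheses (rho1_hom : {morph rho1 : x y / x * y}) (rho2_hom : {morph rho2 : x y / x * y}).
Hypothesis rho1_in : forall p, rho1 p \in G1.
Local Open Scope ring_scope.

Lemma conj_twist (T : GLk k n1 -> 'M[k]_n1.+1) (A : 'M_(n1.+1, n2.+1)) B
    (f : {morphism (G1 / Scal k n1)%g >-> coset_of (Scal k n2)}) :
    {morph T : g h / (g * h)%g >-> g *m h} -> T 1%g = 1%:M ->
    A *m B = 1%:M -> B *m A = 1%:M ->
    (forall p, f (coset (Scal k n1) (rho1 p)) = coset (Scal k n2) (rho2 p)) ->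
    (forall g, g \in G1 -> exists h : GLk k n2,
       GLval h = B *m T g *m A /\ f (coset (Scal k n1) g) = coset (Scal k n2) h) ->
  exists2 chi, one_dim_rep chi &
    forall p, GLval (rho2 p) = chi p *: (B *m T (rho1 p) *m A).
Proof.
move=> TM T1 AB BA fE conjE; apply: one_dim_twist => // [p q | | p].
- by rewrite rho1_hom TM !mulmxA -[B *m _ *m A *m B]mulmxA AB mulmx1.
- by rewrite mulg_morph1 // T1 mulmx1 BA.
have [h [<- fh]] := conjE _ (rho1_in p).
by apply: coset_Scal_eq; rewrite -fE fh.
Qed.

End ConjugateTwist.

Section FieldTwists.
Variables (k : finFieldType) (n : nat) (s : {rmorphism k -> k}).
Local Open Scope ring_scope.

Lemma map_GL1 : map_mx s (GLval (1 : GLk k n)) = 1%:M.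
Proof. exact: map_mx1. Qed.

Lemma map_GL_dual1 : (invmx (map_mx s (GLval (1 : GLk k n))))^T = 1%:M.
Proof. by rewrite map_GL1 invmx1 trmx1. Qed.

Lemma map_GL_morph :
  {morph (fun g : GLk k n => map_mx s (GLval g)) : g h / (g * h)%g >-> g *m h}.
Proof. by move=> g h; rewrite GL_MxE map_mxM. Qed.

Lemma map_GL_dual_morph :
  {morph (fun g : GLk k n => (invmx (map_mx s (GLval g)))^T) : g h / (g * h)%g >-> g *m h}.
Proof. by move=> g h; rewrite -!map_invmx -!GL_VxE invMg GL_MxE map_mxM trmx_mul. Qed.

End FieldTwists.

Section GoursatTwist.
Variables (pi : groupType) (k : finFieldType) (n1 n2 : nat).
Variables (rho1 : pi -> GLk k n1) (rho2 : pi -> GLk k n2).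
Variables (G1 : {group GLk k n1}) (G2 : {group GLk k n2}).
Hypotheses (rho1_hom : {morph rho1 : x y / x * y}) (rho2_hom : {morph rho2 : x y / x * y}).
Hypotheses (G1_img : G1 :=: img_of rho1 predT) (G2_img : G2 :=: img_of rho2 predT).

Let rho1_in p : rho1 p \in G1. Proof. by rewrite G1_img mem_img_of. Qed.
Let rho2_in p : rho2 p \in G2. Proof. by rewrite G2_img mem_img_of. Qed.

Lemma twist_of_Scal_preim_eq :
    goursat_adapted G1 G2 ->
    (forall p, (rho1 p \in Scal k n1) = (rho2 p \in Scal k n2)) ->
  exists s, field_aut s /\ exists2 chi, one_dim_rep chi &
    iso_twist rho2 rho1 chi s \/ iso_twist_dual rho2 rho1 chi s.
Proof.
move=> adapted ScalE.
pose phi1 := coset (Scal k n1) \o rho1; pose phi2 := coset (Scal k n2) \o rho2.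
have phi1_hom : {morph phi1 : x y / x * y}.
  by move=> p q; rewrite /phi1 /= rho1_hom coset_morphM ?Scal_norm.
have phi2_hom : {morph phi2 : x y / x * y}.
  by move=> p q; rewrite /phi2 /= rho2_hom coset_morphM ?Scal_norm.
have G1q : G1 / Scal k n1 :=: img_of phi1 predT.
  by rewrite G1_img quotient_img_of // => p; apply: Scal_norm.
have G2q : G2 / Scal k n2 :=: img_of phi2 predT.
  by rewrite G2_img quotient_img_of // => p; apply: Scal_norm.
have kerE p : (phi1 p == 1) = (phi2 p == 1) by rewrite /= !coset_Scal_eq1 ScalE.
have [f isof fE] := isom_of_ker_eq phi1_hom phi2_hom G1q G2q kerE.
have [s [s_aut [A [B [[AB BA] [conjE | conjE]]]]]] := adapted f isof; exists s; split=> //.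
  have [chi chi1 rhoE] := conj_twist rho1_hom rho2_hom rho1_in (map_GL_morph s)
    (map_GL1 n1 s) AB BA fE conjE.
  by exists chi => //; left; exists A, B.
have [chi chi1 rhoE] := conj_twist rho1_hom rho2_hom rho1_in (map_GL_dual_morph s)
  (map_GL_dual1 n1 s) AB BA fE conjE.
by exists chi => //; right; exists A, B.
Qed.

Lemma center_preims_differ_of_goursat :
    natural_proj_faithful G1 -> natural_proj_faithful G2 -> goursat_adapted G1 G2 ->
    (forall chi s, one_dim_rep chi -> field_aut s ->
       ~ iso_twist rho2 rho1 chi s /\ ~ iso_twist_dual rho2 rho1 chi s) ->
  ~ (forall p, (rho1 p \in 'Z(G1)) = (rho2 p \in 'Z(G2))).
Proof.
move=> faithful1 faithful2 adapted no_twist centerE.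
have [p|s [s_aut [chi chi1 twistE]]] := twist_of_Scal_preim_eq adapted.
  by move: (centerE p); rewrite faithful1 faithful2 !in_setI rho1_in rho2_in.
by have [] := no_twist chi s chi1 s_aut; case: twistE.
Qed.

End GoursatTwist.

Lemma img_setE (pi : groupType) (k : finFieldType) (n : nat) (rho : pi -> GLk k n) :
  img_set rho = img_of rho predT.
Proof. by apply/setP=> g; rewrite inE; apply/asboolP/img_ofP=> [[p]|[p]]; exists p. Qed.

Local Close Scope group_scope.
Local Open Scope ring_scope.

Theorem proposition4p11
  (pi : groupType) (k : finFieldType) (F : fieldType) (N : nat)
  (n m : 'I_N -> nat)
  (rho : forall i : 'I_N, pi -> GLk k (n i))
  (G : forall i : 'I_N, {group GLk k (n i)})
  (eta : forall i : 'I_N, mx_representation F (G i) (m i))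
  (rho_hom : forall i, {morph rho i : x y / (x * y)%g})
  (G_img : forall i, (G i : {set _}) = img_set (rho i))
  (eta_nontriv : forall i, exists2 x, x \in G i & eta i x != 1%:M)
  (H1 : forall i, quasisimple (G i))
  (H2 : forall i j, i != j ->
          [/\ natural_proj_faithful (G i), natural_proj_faithful (G j)
            & goursat_adapted (G i) (G j)])
  (H3 : forall i j, i != j ->
          forall (chi : pi -> k) (s : {rmorphism k -> k}),
            one_dim_rep chi -> field_aut s ->
            ~ iso_twist (rho i) (rho j) chi s /\
            ~ iso_twist_dual (rho i) (rho j) chi s) :
  forall x : forall i : 'I_N, GLk k (n i),
    (forall i, x i \in G i) ->
    exists p : pi, forall i, eta i (rho i p) = eta i (x i).
Proof.
move=> x Gx.
have G_img' i : G i :=: img_of (rho i) predT by rewrite G_img img_setE.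
have center_preims_differ i j : i != j ->
    ~ (forall p, (rho i p \in 'Z(G i)%g) = (rho j p \in 'Z(G j)%g)).
  move=> neq_ij; have [faithful_i faithful_j adapted] := H2 i j neq_ij.
  apply: center_preims_differ_of_goursat => // chi s chi1 s_aut.
  by apply: H3; rewrite // eq_sym.
have [p rhoE] := subdirect_onto rho_hom G_img' H1 center_preims_differ Gx.
by exists p => i; rewrite rhoE.
Qed.
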